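(* Let $\mathbb{K}$ be an infinite field of characteristic zero and $\Delta$ a pure $2$-dimensional simplicial complex on vertex set $[n]$. If the facet ideal $\mathcal{F}(\Delta)\subset\mathbb{K}[x_1,\dots,x_n]$ is of linear type, then $A(\Delta)$ has the strong Lefschetz property.
   Context: Let $S=\mathbb{K}[x_1,\dots,x_n]$. For a simplicial complex $\Delta$ on $[n]$, $\mathcal{N}(\Delta)=(x_\tau:\tau\subseteq[n],\ \tau\notin\Delta)$ is the Stanley–Reisner ideal and $\mathcal{F}(\Delta)=(x_F:F\text{ a facet of }\Delta)$ the facet ideal, with $x_\tau=\prod_{j\in\tau}x_j$. $A(\Delta)=S/(\mathcal{N}(\Delta)+(x_1^2,\dots,x_n^2))$. A graded artinian algebra $A$ has the strong Lefschetz property if for a general linear form $L$ all maps $\times L^j:A_i\to A_{i+j}$ have full rank. An ideal $I\subset S$ is of linear type if its Rees algebra $S[It]=\bigoplus_{i\ge0}I^it^i$ is isomorphic to the symmetric algebra of $I$ (equivalently, the defining ideal of $S[It]$ as a quotient of $S[w_1,\dots,w_s]$, $w_k\mapsto g_kt$ for generators $g_k$ of $I$, is generated by polynomials linear in the $w_k$). *)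

From HB Require Import structures.
From mathcomp Require Import all_boot all_order all_algebra.
From mathcomp Require Export multinomials.mpoly.
Set Implicit Arguments. Unset Strict Implicit. Unset Printing Implicit Defensive.
Import Order.TTheory GRing.Theory Num.Theory.
Local Open Scope ring_scope.

Section Defs.
Variable K : fieldType.

Definition in_ideal (m : nat) (gs : seq {mpoly K[m]}) (f : {mpoly K[m]}) : Prop :=
  exists cs : seq {mpoly K[m]}, size cs = size gs /\
    f = \sum_(i < size gs) cs`_i * gs`_i.

Definition in_ideal_set (m : nat) (P : {mpoly K[m]} -> Prop) (f : {mpoly K[m]}) : Prop :=
  exists gs : seq {mpoly K[m]}, (forall g, g \in gs -> P g) /\ in_ideal gs f.

Variable n : nat.

Definition simplicial_complex (D : {set {set 'I_n}}) : Prop :=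
  set0 \in D /\
  (forall s t : {set 'I_n}, t \in D -> s \subset t -> s \in D) /\
  (forall i : 'I_n, [set i] \in D).

Definition facets (D : {set {set 'I_n}}) : {set {set 'I_n}} :=
  [set F in D | [forall G in D, (F \subset G) ==> (G == F)]].

Definition pure_of_dim (d : nat) (D : {set {set 'I_n}}) : Prop :=
  forall F, F \in facets D -> #|F| = d.+1.

Definition xmon (tau : {set 'I_n}) : {mpoly K[n]} := \prod_(j in tau) 'X_j.

Definition SR_gens (D : {set {set 'I_n}}) : seq {mpoly K[n]} :=
  [seq xmon tau | tau <- enum (~: D)].

Definition facet_gens (D : {set {set 'I_n}}) : seq {mpoly K[n]} :=
  [seq xmon F | F <- enum (facets D)].

(* generators of the ideal N(D) + (x_1^2,...,x_n^2), so A(D) = S / this ideal *)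
Definition AD_gens (D : {set {set 'I_n}}) : seq {mpoly K[n]} :=
  SR_gens D ++ [seq 'X_i ^+ 2 | i <- enum 'I_n].

(* For generators g_0..g_{s-1} of I, the ring S[w_1..w_s] is {mpoly K[n + s]},
   x_i = 'X_(lshift s i), w_k = 'X_(rshift n k).  The map to S[t] = {poly S}
   sends x_i |-> x_i and w_k |-> g_k t. *)
Definition rees_map (gs : seq {mpoly K[n]}) (p : {mpoly K[n + size gs]})
  : {poly {mpoly K[n]}} :=
  mmap (fun c : K => (c%:MP)%:P)
       (fun i : 'I_(n + size gs) =>
          match split i with
          | inl j => ('X_j)%:P
          | inr k => (gs`_k)%:P * 'X
          end) p.

Definition wdeg (s : nat) (m : 'X_{1..n + s}) : nat :=
  (\sum_(k < s) m (rshift n k))%N.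

Definition linear_in_w (s : nat) (p : {mpoly K[n + s]}) : bool :=
  all (fun m => wdeg m == 1%N) (msupp p).

Definition linear_type (gs : seq {mpoly K[n]}) : Prop :=
  forall p : {mpoly K[n + size gs]}, rees_map p = 0 ->
    in_ideal_set (fun q => rees_map q = 0 /\ linear_in_w q) p.

(* multiplication by L^j from A_i to A_{i+j} has full rank, where
   A_i = S_i / I_i (I homogeneous): injective or surjective *)
Definition mult_full_rank (gs : seq {mpoly K[n]}) (L : {mpoly K[n]}) (i j : nat) : Prop :=
  (forall f : {mpoly K[n]}, f \is i.-homog ->
      in_ideal gs (L ^+ j * f) -> in_ideal gs f)
  \/
  (forall g : {mpoly K[n]}, g \is (i + j)%N.-homog ->
      exists f : {mpoly K[n]}, f \is i.-homog /\ in_ideal gs (g - L ^+ j * f)).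

Definition linform (c : 'I_n -> K) : {mpoly K[n]} := \sum_(i < n) c i *: 'X_i.

(* SLP: for a general linear form L = sum c_i x_i, i.e. for all c outside
   a proper Zariski-closed set {P = 0}, P a nonzero polynomial, all maps
   x L^j : A_i -> A_{i+j} have full rank *)
Definition strong_lefschetz (gs : seq {mpoly K[n]}) : Prop :=
  exists P : {mpoly K[n]}, P != 0 /\
    forall c : 'I_n -> K, P.@[c] != 0 ->
      forall i j : nat, mult_full_rank gs (linform c) i j.

End Defs.

From HB Require Import structures.
From mathcomp Require Import all_boot all_order all_algebra.
From mathcomp Require Import multinomials.mpoly.
From mathcomp Require Import ring.
Set Implicit Arguments. Unset Strict Implicit. Unset Printing Implicit Defensive.
Import Order.TTheory GRing.Theory Num.Theory.
Local Open Scope ring_scope.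

(* In A(D) the squarefree monomials x_s, s a face, form a basis: a polynomial
   lies in N(D) + (x_1^2, ..., x_n^2) iff its coefficients at these monomials
   vanish. For L = sum_i c_i x_i the coefficient of L^j f at x_s is
   j! sum_t c^(s \ t) f_t, over the t included in s with |t| + j = |s|.
   As D is pure of dimension 2, A(D) lives in degrees 0..3. When no c_i
   vanishes, multiplication by L^j is injective from A_0 (look at one facet),
   injective from A_1 to A_2 (the three edge equations of a triangle through a
   vertex force its coefficient to vanish, as 2 != 0), and surjective onto A_3
   from A_1 and A_2 as soon as every function on the facets has the form
   F |-> sum_(i in F) b_i, i.e. as soon as the facet-vertex incidence matrix has
   full row rank; all other maps are trivially of full rank.
   Linear type gives this rank. If two N-combinations p, q of facets have the
   same vertex multiplicities, then w^p - w^q lies in the kernel of the Rees map,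
   hence in the ideal generated by the linear relations. Setting x = 0 kills
   every linear relation, because distinct facets give distinct monomials of the
   same degree, but fixes w^p - w^q; so p = q. Clearing denominators, the
   incidence matrix has no left kernel over Q, hence none over K in
   characteristic 0. *)

Section SetMonomials.
Variable n : nat.
Implicit Types s t : {set 'I_n}.

Definition mnm_set s : 'X_{1..n} := [multinom (i \in s : nat) | i < n].

Lemma mnm_setE s i : mnm_set s i = (i \in s).
Proof. by rewrite mnmE. Qed.

Lemma mnm_set_sum s : mnm_set s = (\sum_(i in s) U_(i))%MM.
Proof.
apply/mnmP => i; rewrite mnm_setE mnm_sumE.
under eq_bigr => j _ do rewrite mnm1E.
case: (boolP (i \in s)) => [si | /negbTE ns].
  by rewrite (bigD1 i) //= eqxx big1 // => j /andP[_ /negbTE ->].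
by rewrite big1 // => j js; case: eqP => // ji; rewrite -ji js in ns.
Qed.

Lemma mdeg_mnm_set s : mdeg (mnm_set s) = #|s|.
Proof.
by rewrite mnm_set_sum mdeg_sum -sum1_card; apply: eq_bigr => i _; rewrite mdeg1.
Qed.

Lemma mnm_set_inj : injective mnm_set.
Proof.
move=> s t /mnmP st; apply/setP => i.
by move: (st i); rewrite !mnm_setE => /eqP; case: (i \in s); case: (i \in t).
Qed.

Lemma lem_mnm_set s t : (mnm_set s <= mnm_set t)%MM = (s \subset t).
Proof.
apply/mnm_lepP/subsetP => [st i si | st i].
  by move: (st i); rewrite !mnm_setE si; case: (i \in t).
by rewrite !mnm_setE; case: (boolP (i \in s)) => // /st ->.
Qed.

Lemma mnm_set1 i : mnm_set [set i] = U_(i)%MM.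
Proof. by apply/mnmP => j; rewrite mnm_setE mnm1E inE eq_sym. Qed.

Lemma mnm_setD1 s i : i \in s -> (mnm_set s - U_(i))%MM = mnm_set (s :\ i).
Proof.
move=> si; apply/mnmP => j; rewrite mnmBE mnm1E !mnm_setE !inE.
by case: (eqVneq i j) => [<- | _]; rewrite ?si ?subn0.
Qed.

Lemma xmonE (K : fieldType) s : xmon K s = 'X_[mnm_set s].
Proof. by rewrite /xmon mprodXE mnm_set_sum. Qed.

End SetMonomials.

Lemma mcoeffMX_cond (R : nzRingType) n (p : {mpoly R[n]}) m k :
  (p * 'X_[m])@_k = if (m <= k)%MM then p@_(k - m) else 0.
Proof.
case: ifP => [mk | mNk]; first by rewrite -{1}(submK mk) addmC mcoeffMX.
rewrite {1}(mpolyE p) mulr_suml raddf_sum big1 //= => m' _.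
rewrite -scalerAl -mpolyXD mcoeffZ mcoeffX.
case: eqP => [mk | _]; last by rewrite mulr0.
by rewrite -mk lem_addl in mNk.
Qed.

Lemma dhomog_mcoeff_eq0 (R : nzRingType) n d (p : {mpoly R[n]}) m :
  p \is d.-homog -> mdeg m != d -> p@_m = 0.
Proof. exact: dhomog_nemf_coeff. Qed.

Section IdealMembership.
Variables (K : fieldType) (n : nat).
Implicit Types (gs : seq {mpoly K[n]}) (f : {mpoly K[n]}).

Lemma in_idealP gs f :
  in_ideal gs f <-> exists c : 'I_(size gs) -> {mpoly K[n]}, f = \sum_i c i * gs`_i.
Proof.
split=> [[cs [_ ->]] | [c ->]]; first by exists (fun i => cs`_i).
exists (mkseq (fun i => odflt 0 (omap c (insub i))) (size gs)).
rewrite size_mkseq; split=> //; apply: eq_bigr => i _.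
by rewrite nth_mkseq // valK.
Qed.

Lemma in_ideal0 gs : in_ideal gs 0.
Proof.
by apply/in_idealP; exists (fun _ => 0); rewrite big1 // => i _; rewrite mul0r.
Qed.

Lemma in_idealD gs f g : in_ideal gs f -> in_ideal gs g -> in_ideal gs (f + g).
Proof.
move=> /in_idealP[c ->] /in_idealP[d ->]; apply/in_idealP.
by exists (fun i => c i + d i); rewrite -big_split; apply: eq_bigr => i _; rewrite mulrDl.
Qed.

Lemma in_idealMl gs h f : in_ideal gs f -> in_ideal gs (h * f).
Proof.
move=> /in_idealP[c ->]; apply/in_idealP; exists (fun i => h * c i).
by rewrite mulr_sumr; apply: eq_bigr => i _; rewrite mulrA.
Qed.

Lemma in_ideal_sum gs (I : Type) (r : seq I) (P : pred I) (F : I -> {mpoly K[n]}) :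
  (forall i, P i -> in_ideal gs (F i)) -> in_ideal gs (\sum_(i <- r | P i) F i).
Proof.
move=> FI; elim/big_rec: _ => [|i f Pi]; first exact: in_ideal0.
exact: in_idealD (FI i Pi).
Qed.

Lemma mem_in_ideal gs g : g \in gs -> in_ideal gs g.
Proof.
move=> gs_g; have gi : (index g gs < size gs)%N by rewrite index_mem.
apply/in_idealP; exists (fun j => ((j : nat) == index g gs)%:R).
rewrite (bigD1 (Ordinal gi)) //= eqxx mul1r nth_index // big1 ?addr0 // => j.
by rewrite -val_eqE /= => /negbTE ->; rewrite mul0r.
Qed.

End IdealMembership.

Section FaceRingIdeal.
Variables (K : fieldType) (n : nat) (D : {set {set 'I_n}}).
Hypothesis D_closed : forall s t : {set 'I_n}, t \in D -> s \subset t -> s \in D.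
Local Notation I := (AD_gens K D).

Lemma AD_gensP g : g \in I ->
  exists2 m, g = 'X_[m] & forall s, s \in D -> ~~ (m <= mnm_set s)%MM.
Proof.
rewrite mem_cat => /orP[/mapP[t tND ->] | /mapP[i _ ->]].
  exists (mnm_set t) => [|s sD]; first exact: xmonE.
  rewrite lem_mnm_set; apply: contraL tND => /(D_closed sD).
  by rewrite mem_enum inE negbK.
exists (U_(i) *+ 2)%MM => [|s _]; first by rewrite mpolyXn.
by apply/mnm_lepP => /(_ i); rewrite mulmnE mnm1E eqxx mnm_setE; case: (i \in s).
Qed.

Lemma in_AD_ideal_X m : (forall s, s \in D -> m != mnm_set s) -> in_ideal I 'X_[m].
Proof.
case: (boolP [exists i, 1 < m i]%N) => [/existsP[i mi] _ | /existsPn m_le1 m_nonface].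
  have sq_le : (U_(i) *+ 2 <= m)%MM.
    by apply/mnm_lepP => j; rewrite mulmnE mnm1E; case: eqP => [<-|].
  rewrite -(submK sq_le) mpolyXD -mpolyXn; apply/in_idealMl/mem_in_ideal.
  by rewrite mem_cat; apply/orP; right; apply: map_f; rewrite mem_enum.
pose t := [set i | m i != 0%N].
have mt : m = mnm_set t.
  by apply/mnmP => i; rewrite mnm_setE inE; move: (m_le1 i); case: (m i) => [|[]].
have tND : t \notin D by apply: contraL (eqxx m) => /m_nonface; rewrite -mt.
rewrite mt -xmonE; apply/mem_in_ideal.
by rewrite mem_cat; apply/orP; left; apply: map_f; rewrite mem_enum inE.
Qed.

Lemma in_AD_idealP f :
  in_ideal I f <-> (forall s, s \in D -> f@_(mnm_set s) = 0).
Proof.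
split=> [/in_idealP[c ->] s sD | f_face0].
  rewrite raddf_sum big1 //= => i _.
  have [m -> mNs] := AD_gensP (mem_nth 0 (ltn_ord i)).
  by rewrite mcoeffMX_cond (negbTE (mNs s sD)).
rewrite (mpolyE f); apply: in_ideal_sum => m _.
case: (boolP [exists s in D, m == mnm_set s]).
  by move=> /exists_inP[s sD /eqP ->]; rewrite f_face0 // scale0r; apply: in_ideal0.
move=> /exists_inPn nonface.
by rewrite -mul_mpolyC; apply/in_idealMl/in_AD_ideal_X.
Qed.

End FaceRingIdeal.

Section LinearFormPowers.
Variables (K : fieldType) (n : nat) (c : 'I_n -> K).
Implicit Types (h : {mpoly K[n]}) (s t : {set 'I_n}).
Local Notation L := (linform c).

Definition cprod s := \prod_(k in s) c k.

Lemma linform_homog : L \is 1.-homog.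
Proof. by apply: rpred_sum => i _; apply: rpredZ; rewrite dhomogX; apply/eqP/mdeg1. Qed.

Lemma mcoeff_linform i : L@_U_(i) = c i.
Proof.
rewrite raddf_sum (bigD1 i) //= mcoeffZ mcoeffXU eqxx mulr1 big1 ?addr0 // => k.
by move=> /negbTE ki; rewrite mcoeffZ mcoeffXU ki mulr0.
Qed.

Lemma mcoeff_linformM h s :
  (L * h)@_(mnm_set s) = \sum_(k in s) c k * h@_(mnm_set (s :\ k)).
Proof.
rewrite mulr_suml raddf_sum [RHS]big_mkcond; apply: eq_bigr => i _ /=.
rewrite -scalerAl mcoeffZ [_ * h]mulrC mcoeffMX_cond lep1mP mnm_setE.
by case: (boolP (i \in s)) => si; rewrite ?mulr0 ?mnm_setD1.
Qed.

Lemma mcoeff_linformXM j h s :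
  (L ^+ j * h)@_(mnm_set s) = j`!%:R *
    \sum_(t : {set 'I_n} | (t \subset s) && (#|t| + j == #|s|)%N)
      cprod (s :\: t) * h@_(mnm_set t).
Proof.
elim: j h s => [|j IH] h s.
  rewrite expr0 mul1r fact0 mul1r (big_pred1 s) ?setDv /cprod ?big_set0 ?mul1r //.
  move=> t /=; rewrite addn0; apply/andP/eqP => [[ts /eqP ct] | ->].
    by apply/eqP; rewrite eqEcard ts ct /=.
  by rewrite subxx.
rewrite exprS -mulrA mcoeff_linformM.
under eq_bigr => k _ do rewrite IH mulrCA mulr_sumr.
rewrite -mulr_sumr factS natrM [_.+1%:R * _]mulrC -mulrA; congr (_ * _).
rewrite (exchange_big_dep (fun t => (t \subset s) && (#|t| + j.+1 == #|s|)%N)) /=;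
  last first.
  move=> k t ks /andP[ts /eqP ct]; rewrite (subset_trans ts (subD1set _ _)) /=.
  by rewrite (cardsD1 k s) ks -ct addnS addnC.
rewrite mulr_sumr; apply: eq_bigr => t /andP[ts /eqP ct].
rewrite (eq_bigl (fun k => k \in s :\: t)); last first.
  move=> k; rewrite inE; case: (boolP (k \in s)) => ks; rewrite ?andbF ?andbT //=.
  rewrite subsetD1 ts /=.
  have -> : #|s :\ k| = (#|t| + j)%N.
    by have := cardsD1 k s; rewrite ks -ct addnS add1n => -[] <-.
  by rewrite eqxx andbT.
rewrite (eq_bigr (fun _ => cprod (s :\: t) * h@_(mnm_set t))); last first.
  move=> i it; rewrite mulrA; congr (_ * _).
  rewrite /cprod [in RHS](big_setD1 i it); congr (_ * _).
  by apply: eq_bigl => x; rewrite !inE; case: (x \notin t); case: (x != i).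
rewrite sumr_const mulr_natl.
by rewrite cardsD (setIidPr ts) -ct addnS subSn ?leq_addr // addnC addnK.
Qed.

Lemma mcoeff_linformXM_vertices j h s : #|s| = j.+1 ->
  (L ^+ j * h)@_(mnm_set s) = j`!%:R * \sum_(i in s) cprod (s :\ i) * h@_U_(i).
Proof.
move=> cs; rewrite mcoeff_linformXM; congr (_ * _).
transitivity (\sum_(t in [set [set i] | i in s]) cprod (s :\: t) * h@_(mnm_set t)).
  apply: eq_bigl => t; rewrite cs; apply/andP/imsetP => [[ts /eqP ct] | [i si ->]].
    have /cards1P[i ti] : #|t| == 1%N by rewrite -(eqn_add2r j) add1n ct.
    by exists i => //; apply: (subsetP ts); rewrite ti set11.
  by rewrite sub1set si cards1 add1n.
rewrite big_imset /=; last by move=> x y _ _ /setP/(_ x); rewrite !inE eqxx => /esym/eqP.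
by apply: eq_bigr => i _; rewrite mnm_set1.
Qed.

End LinearFormPowers.

Section PureComplex.
Variables (n : nat) (D : {set {set 'I_n}}).
Implicit Types s F : {set 'I_n}.

Lemma facet_face F : F \in facets D -> F \in D.
Proof. by rewrite inE => /andP[]. Qed.

Lemma face_sub_facet s : s \in D -> exists2 F, F \in facets D & s \subset F.
Proof.
move=> sD; pose P := [pred t | (t \in D) && (s \subset t)].
have [|F /andP[FD sF] Fmax] := @arg_maxnP _ s P (fun t => #|t|).
  by rewrite /= sD subxx.
exists F => //; rewrite inE FD; apply/forall_inP => G GD; apply/implyP => FG.
by rewrite eq_sym eqEcard FG; apply: Fmax; rewrite /= GD (subset_trans sF FG).
Qed.

Variable d : nat.
Hypothesis hpure : pure_of_dim d D.

Lemma card_face_le s : s \in D -> (#|s| <= d.+1)%N.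
Proof. by move=> /face_sub_facet[F /hpure <-]; apply: subset_leq_card. Qed.

Lemma facet_of_card s : s \in D -> #|s| = d.+1 -> s \in facets D.
Proof.
move=> /face_sub_facet[F FD sF] cs; suff -> : s = F by [].
by apply/eqP; rewrite eqEcard sF cs (hpure FD) /=.
Qed.

End PureComplex.

Section Pchar0.
Variable K : fieldType.
Hypothesis charK0 : [pchar K] =i pred0.

Lemma pchar0_natr_eq0 k : (k%:R == 0 :> K) = (k == 0)%N.
Proof. by move/pcharf0P: charK0. Qed.

Lemma pchar0_intr_eq0 (z : int) : (z%:~R == 0 :> K) = (z == 0).
Proof. by case: z => k; rewrite ?NegzE ?mulrNz ?oppr_eq0 pchar0_natr_eq0. Qed.

(* No hypothesis [b != 0] is needed: for [b = 0] both sides are [0]. *)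
Lemma ratr_frac (a b : int) : ratr (a%:~R / b%:~R) = a%:~R / b%:~R :> K.
Proof.
case: divqP => [_ | k x k0]; first by rewrite /ratr /= mul0r mulr0z invr0 mulr0.
rewrite !rmorphM /= -mulf_div divff ?mul1r //.
by rewrite pchar0_intr_eq0.
Qed.

Fact ratr_pchar0_is_zmod_morphism : zmod_morphism (@ratr K).
Proof.
have frac_sub (F : fieldType) (a b c d : int) : b%:~R != 0 :> F -> d%:~R != 0 :> F ->
    a%:~R / b%:~R - c%:~R / d%:~R = (a * d - c * b)%:~R / (b * d)%:~R :> F.
  by move=> b0 d0; rewrite rmorphB !rmorphM /=; field; rewrite b0 d0.
move=> x y; rewrite [in RHS]/ratr frac_sub ?pchar0_intr_eq0 ?denq_neq0 //.
by rewrite -ratr_frac -frac_sub ?intr_eq0 ?denq_neq0 // !divq_num_den.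
Qed.

Fact ratr_pchar0_is_monoid_morphism : monoid_morphism (@ratr K).
Proof.
split=> [|x y]; first by rewrite /ratr divr1.
rewrite [in RHS]/ratr mulf_div -!rmorphM -ratr_frac !rmorphM /= -mulf_div.
by rewrite !divq_num_den.
Qed.

Definition ratr_pchar0 : {rmorphism rat -> K} :=
  HB.pack (@ratr K)
    (GRing.isZmodMorphism.Build _ _ _ ratr_pchar0_is_zmod_morphism)
    (GRing.isMonoidMorphism.Build _ _ _ ratr_pchar0_is_monoid_morphism).

End Pchar0.

Definition facet_sums_onto (K : fieldType) (n : nat) (D : {set {set 'I_n}}) : Prop :=
  forall gam : {set 'I_n} -> K, exists bet : 'I_n -> K,
    forall F, F \in facets D -> \sum_(i in F) bet i = gam F.

Section LefschetzPure2.
Variable K : fieldType.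
Hypothesis charK0 : [pchar K] =i pred0.
Variables (n : nat) (D : {set {set 'I_n}}).
Hypothesis hD : simplicial_complex D.
Hypothesis hpure : pure_of_dim 2 D.
Variable c : 'I_n -> K.
Hypothesis c_neq0 : forall i, c i != 0.
Hypothesis honto : facet_sums_onto K D.
Implicit Types (f g : {mpoly K[n]}) (s : {set 'I_n}).
Local Notation L := (linform c).
Local Notation I := (AD_gens K D).

Let D_closed : forall s t, t \in D -> s \subset t -> s \in D.
Proof. by case: hD => _ []. Qed.

Local Notation in_IP := (in_AD_idealP (K := K) D_closed).

Lemma cprod_neq0 s : cprod c s != 0.
Proof. by apply/prodf_neq0 => i _. Qed.

Lemma AD_vanish_above3 k g : (3 < k)%N -> g \is k.-homog -> in_ideal I g.
Proof.
move=> k_gt3 gk; apply/in_IP => s sD; apply: dhomog_mcoeff_eq0 gk _.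
by rewrite mdeg_mnm_set; apply: contraTneq (card_face_le hpure sD) => ->; rewrite -ltnNge.
Qed.

Lemma AD_injective_deg0 j f : (j <= 3)%N -> f \is 0.-homog ->
  in_ideal I (L ^+ j * f) -> in_ideal I f.
Proof.
move=> j_le3 f0 Ljf.
have /in_IP L3f : in_ideal I (L ^+ 3 * f).
  by rewrite -(subnK j_le3) exprD -mulrA; apply: in_idealMl.
have [F FF _] := face_sub_facet (hD.1).
have := L3f F (facet_face FF); rewrite mcoeff_linformXM (big_pred1 set0); last first.
  move=> t /=; rewrite (hpure FF) -[3%N]add0n eqn_add2r cards_eq0.
  by apply/andP/eqP => [[_ /eqP] | ->]; rewrite ?sub0set.
move/eqP; rewrite setD0 !mulf_eq0 pchar0_natr_eq0 // (negbTE (cprod_neq0 _)) /=.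
move=> /eqP f00.
apply/in_IP => s sD; have [-> // | s0] := eqVneq s set0.
by apply: dhomog_mcoeff_eq0 f0 _; rewrite mdeg_mnm_set cards_eq0.
Qed.

Lemma mcoeff_edge f a b : a != b -> [set a; b] \in D -> in_ideal I (L * f) ->
  c b * f@_U_(a) + c a * f@_U_(b) = 0.
Proof.
move=> ab abD /in_IP/(_ _ abD).
rewrite -[L]expr1 mcoeff_linformXM_vertices ?cards2 ?ab //.
rewrite mul1r big_setU1 ?inE //= big_set1 setU1K ?inE // setUC setU1K ?inE 1?eq_sym //.
by rewrite /cprod !big_set1.
Qed.

Lemma AD_injective_1_1 f : f \is 1.-homog ->
  in_ideal I (L ^+ 1 * f) -> in_ideal I f.
Proof.
rewrite expr1 => f1 Lf; apply/in_IP => s sD.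
have [/eqP/cards1P[k ->] | s_ne1] := eqVneq #|s| 1%N; last first.
  by apply: dhomog_mcoeff_eq0 f1 _; rewrite mdeg_mnm_set.
have [F FF kF] := face_sub_facet (hD.2.2 k); rewrite sub1set in kF.
have /cards2P[l [m [lm Fk]]] : #|F :\ k| == 2%N.
  by move: (cardsD1 k F); rewrite kF (hpure FF) add1n => -[<-].
have : l \in F :\ k /\ m \in F :\ k by rewrite Fk !inE !eqxx orbT.
rewrite !inE => -[/andP[lk lF] /andP[mk mF]].
have edgeD a b : a \in F -> b \in F -> [set a; b] \in D.
  move=> aF bF; apply: D_closed (facet_face FF) _.
  by apply/subsetP => x; rewrite !inE => /orP[] /eqP ->.
have ekl : c l * f@_U_(k) + c k * f@_U_(l) = 0.
  by apply: mcoeff_edge (edgeD _ _ kF lF) Lf; rewrite eq_sym.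
have ekm : c m * f@_U_(k) + c k * f@_U_(m) = 0.
  by apply: mcoeff_edge (edgeD _ _ kF mF) Lf; rewrite eq_sym.
have elm : c m * f@_U_(l) + c l * f@_U_(m) = 0.
  exact: mcoeff_edge lm (edgeD _ _ lF mF) Lf.
have : 2%:R * c l * c m * f@_U_(k) = c l * (c m * f@_U_(k) + c k * f@_U_(m))
    + c m * (c l * f@_U_(k) + c k * f@_U_(l)) - c k * (c m * f@_U_(l) + c l * f@_U_(m)).
  by ring.
rewrite ekm ekl elm !mulr0 addr0 subr0 => /eqP.
rewrite !mulf_eq0 pchar0_natr_eq0 // !(negbTE (c_neq0 _)) /= mnm_set1.
by move=> /eqP.
Qed.

Lemma AD_surjective_1_2 g : g \is 3.-homog ->
  exists f, f \is 1.-homog /\ in_ideal I (g - L ^+ 2 * f).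
Proof.
move=> g3; have [bet sum_bet] := honto (fun F => g@_(mnm_set F) / (2%:R * cprod c F)).
exists (linform (fun i => c i * bet i)); split; first exact: linform_homog.
apply/in_IP => s sD; rewrite mcoeffB.
have [s3 | s_ne3] := eqVneq #|s| 3%N.
  rewrite (@mcoeff_linformXM_vertices _ _ _ 2) // (_ : 2`! = 2%N) //.
  under eq_bigr => i si do
    rewrite mcoeff_linform mulrA -[cprod c _ * c i]mulrC -(big_setD1 _ si).
  rewrite -mulr_sumr sum_bet ?(facet_of_card hpure) // mulrA [_ * (_ / _)]mulrC.
  by rewrite divfK ?subrr // mulf_neq0 ?pchar0_natr_eq0 ?cprod_neq0.
rewrite (dhomog_mcoeff_eq0 g3) ?mdeg_mnm_set // mcoeff_linformXM big1 ?mulr0 ?subrr //.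
move=> t /andP[_ /eqP ct]; rewrite (dhomog_mcoeff_eq0 (linform_homog _)) ?mulr0 //.
by rewrite mdeg_mnm_set; apply: contra_neq s_ne3; rewrite -ct => ->.
Qed.

Lemma AD_mult_full_rank i j : mult_full_rank I L i j.
Proof.
have [ij_gt3 | ij_le3] := ltnP 3 (i + j).
  right=> g gij; exists 0; split; first exact: dhomog0.
  by rewrite mulr0 subr0; apply: AD_vanish_above3 gij.
case: j ij_le3 => [|j] ij_le3; first by left=> f _; rewrite expr0 mul1r.
case: i ij_le3 => [|[|[|i]]] ij_le3.
- by left=> f; apply: AD_injective_deg0.
- case: j ij_le3 => [|[|j]] // _; first by left=> f; apply: AD_injective_1_1.
  by right=> g; apply: AD_surjective_1_2.
- case: j ij_le3 => // _; right=> g /AD_surjective_1_2[f [f1 Lf]].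
  exists (L * f); split; first exact: dhomogM (linform_homog c) f1.
  by rewrite expr1 mulrA -expr2.
- by rewrite !addSn !addnS in ij_le3.
Qed.

End LefschetzPure2.

Lemma split_lshift m k (i : 'I_m) : split (lshift k i) = inl i.
Proof. exact: (unsplitK (inl _ i)). Qed.

Lemma split_rshift m k (j : 'I_k) : split (rshift m j) = inr j.
Proof. exact: (unsplitK (inr _ j)). Qed.

Section FacetRees.
Variables (K : fieldType) (n : nat) (D : {set {set 'I_n}}).
Local Notation gs := (facet_gens K D).
Local Notation s := (size (facet_gens K D)).
Implicit Types (m : 'X_{1..n + s}) (p q : 'I_s -> nat).

Definition facet_at (k : nat) := nth set0 (enum (facets D)) k.

Lemma facet_at_index (k : 'I_s) : (k < size (enum (facets D)))%N.
Proof. by rewrite -(size_map (@xmon K n)). Qed.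

Lemma facet_gensE (k : 'I_s) : gs`_k = 'X_[mnm_set (facet_at k)].
Proof. by rewrite (nth_map set0) ?facet_at_index // xmonE. Qed.

Lemma facet_at_facet (k : 'I_s) : facet_at k \in facets D.
Proof. by rewrite -mem_enum mem_nth ?facet_at_index. Qed.

Lemma facet_at_inj (k1 k2 : 'I_s) : facet_at k1 = facet_at k2 -> k1 = k2.
Proof.
move=> /eqP; rewrite nth_uniq ?facet_at_index ?enum_uniq // => /eqP.
exact: val_inj.
Qed.

Lemma facet_at_surj F : F \in facets D -> exists k : 'I_s, facet_at k = F.
Proof.
move=> FD; have Fs : (index F (enum (facets D)) < s)%N.
  by rewrite size_map index_mem mem_enum.
by exists (Ordinal Fs); rewrite /facet_at nth_index ?mem_enum.
Qed.

Definition facet_mnm p : 'X_{1..n} := (\sum_(k < s) mnm_set (facet_at k) *+ p k)%MM.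
Definition xpart m : 'X_{1..n} := [multinom m (lshift s i) | i < n].
Definition wpart m k := m (rshift n k).
Definition wmon p : 'X_{1..n + s} :=
  [multinom if split j is inr k then p k else 0%N | j < n + s].

Lemma wdegE m : wdeg m = (\sum_k wpart m k)%N.
Proof. by []. Qed.

Lemma xpart_wmon p : xpart (wmon p) = 0%MM.
Proof. by apply/mnmP => i; rewrite !mnmE split_lshift. Qed.

Lemma wpart_wmon p : wpart (wmon p) =1 p.
Proof. by move=> k; rewrite /wpart mnmE split_rshift. Qed.

Lemma eq_facet_mnm p q : p =1 q -> facet_mnm p = facet_mnm q.
Proof. by move=> pq; apply: eq_bigr => k _; rewrite pq. Qed.

Lemma rees_mapB : {morph @rees_map K n gs : a b / a - b}.
Proof.
pose h (i : 'I_(n + s)) : {poly {mpoly K[n]}} :=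
  match split i with inl j => ('X_j)%:P | inr k => (gs`_k)%:P * 'X end.
have rees_mmap r : rees_map r = mmap (polyC \o @mpolyC n K) h r by [].
by move=> a b; rewrite !rees_mmap mmapB.
Qed.

Lemma rees_mapX m :
  rees_map 'X_[m] = 'X_[xpart m + facet_mnm (wpart m)]%:P * 'X ^+ wdeg m.
Proof.
rewrite /rees_map /mmap msuppX big_seq1 mcoeffX eqxx /= polyC1 mul1r.
rewrite /mmap1 big_split_ord /=.
under eq_bigr => i _ do rewrite split_lshift -rmorphXn.
under [X in _ * X]eq_bigr => k _ do rewrite split_rshift exprMn -rmorphXn.
rewrite big_split /= prodrXr -!rmorph_prod mulrA -rmorphM mpolyXD.
have -> : \prod_(i < n) 'X_i ^+ m (lshift s i) = 'X_[xpart m] :> {mpoly K[n]}.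
  by rewrite mpolyXE_id; apply: eq_bigr => i _; rewrite mnmE.
have -> // : \prod_(k < s) gs`_k ^+ m (rshift n k) = 'X_[facet_mnm (wpart m)].
by rewrite -mprodXE; apply: eq_bigr => k _; rewrite facet_gensE mpolyXn.
Qed.

Lemma mnm_split_eq m1 m2 : xpart m1 = xpart m2 -> wpart m1 =1 wpart m2 -> m1 = m2.
Proof.
move=> /mnmP x12 w12; apply/mnmP => j; case: (split_ordP j) => [i -> | k ->].
  by move: (x12 i); rewrite !mnmE.
exact: w12.
Qed.

Lemma xpart_U (k : 'I_s) : xpart U_(rshift n k) = 0%MM.
Proof. by apply/mnmP => i; rewrite !mnmE eq_rlshift. Qed.

Lemma wpart_U (k k' : 'I_s) : wpart U_(rshift n k) k' = (k == k').
Proof. by rewrite /wpart mnm1E eq_rshift. Qed.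

Lemma facet_mnm_delta (k : 'I_s) p : (forall k', p k' = (k == k')) ->
  facet_mnm p = mnm_set (facet_at k).
Proof.
move=> pk; rewrite /facet_mnm (bigD1 k) //= pk eqxx mulm1n big1 ?addm0 // => k' k'k.
by rewrite pk eq_sym (negbTE k'k) mulm0n.
Qed.

Lemma wdeg1P m : wdeg m = 1%N -> exists k : 'I_s, forall k', wpart m k' = (k == k').
Proof.
move=> /eqP/sum_nat_eq1[k [_ mk1 mk0]]; exists k => k'.
rewrite /wpart; have [<- // | k'k] := eqVneq k k'.
by rewrite mk0 // eq_sym.
Qed.

Variable d : nat.
Hypothesis hpure : pure_of_dim d D.

Lemma mdeg_facet_mnm p : mdeg (facet_mnm p) = (d.+1 * \sum_k p k)%N.
Proof.
rewrite mdeg_sum big_distrr; apply: eq_bigr => k _.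
by rewrite mdegMn mdeg_mnm_set (hpure (facet_at_facet k)).
Qed.

Lemma rees_mnm_linear m (k : 'I_s) : wdeg m = 1%N ->
  (xpart m + facet_mnm (wpart m) == mnm_set (facet_at k))%MM = (m == U_(rshift n k)%MM).
Proof.
move=> m1; have [k0 mk0] := wdeg1P m1; rewrite (facet_mnm_delta mk0).
apply/eqP/eqP => [Em | mU]; last first.
  have /eqP k0k : k0 == k by move: (mk0 k); rewrite mU wpart_U eqxx; case: (k0 == k).
  by rewrite mU xpart_U add0m k0k.
have x0 : xpart m = 0%MM.
  apply/eqP; rewrite -mdeg_eq0 -(eqn_add2r (mdeg (mnm_set (facet_at k0)))) -mdegD Em.
  by rewrite !mdeg_mnm_set !hpure ?facet_at_facet.
have k0k : k0 = k by apply/facet_at_inj/mnm_set_inj; rewrite -Em x0 add0m.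
by apply: mnm_split_eq => [|k']; rewrite ?xpart_U ?wpart_U -?k0k.
Qed.

Lemma rees_map_linear (r : {mpoly K[n + s]}) : linear_in_w r ->
  rees_map r = (\sum_(m <- msupp r) r@_m *: 'X_[xpart m + facet_mnm (wpart m)])%:P * 'X.
Proof.
move=> /allP r1; rewrite rmorph_sum mulr_suml /rees_map /mmap big_seq [RHS]big_seq.
apply: eq_bigr => m mr; have := rees_mapX m.
rewrite /rees_map /mmap msuppX big_seq1 mcoeffX eqxx /= polyC1 mul1r => ->.
by rewrite (eqP (r1 m mr)) mulrA -rmorphM /= mul_mpolyC.
Qed.

Lemma rees_kernel_linear_coeff (r : {mpoly K[n + s]}) (k : 'I_s) :
  rees_map r = 0 -> linear_in_w r -> r@_U_(rshift n k) = 0.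
Proof.
move=> r0 r1; move: (congr1 (fun a : {poly {mpoly K[n]}} => a`_1) (rees_map_linear r1)).
rewrite r0 coef0 coefMX coefC /= => /esym/(congr1 (mcoeff (mnm_set (facet_at k)))).
rewrite raddf_sum mcoeff0 /= => sum0; rewrite -[RHS]sum0 {1}(mpolyE r) !raddf_sum /=.
rewrite big_seq [RHS]big_seq; apply: eq_bigr => m mr.
by rewrite !mcoeffZ !mcoeffX rees_mnm_linear ?(eqP (allP r1 m mr)).
Qed.

Definition eval_x0 (r : {mpoly K[n + s]}) : {mpoly K[n + s]} :=
  mmap (@mpolyC _ K) (fun j => if split j is inr _ then 'X_j else 0) r.

Lemma eval_x0M : {morph eval_x0 : a b / a * b}.
Proof. exact: (mmap_is_multiplicative _ _).1. Qed.

Lemma eval_x0X m : eval_x0 'X_[m] = if xpart m == 0%MM then 'X_[m] else 0.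
Proof.
rewrite /eval_x0 mmapX /mmap1 big_split_ord /=.
under eq_bigr => i _ do rewrite split_lshift.
under [X in _ * X]eq_bigr => k _ do rewrite split_rshift.
case: eqP => [/mnmP x0 | x_neq0].
  rewrite big1 ?mul1r => [|i _]; last by move: (x0 i); rewrite !mnmE => ->.
  rewrite mpolyXE_id big_split_ord /= [X in _ = X * _]big1 ?mul1r // => i _.
  by move: (x0 i); rewrite !mnmE => ->.
have [i mi] : exists i, m (lshift s i) != 0%N.
  apply/existsP; apply: contra_notT x_neq0 => /existsPn mi0.
  by apply/mnmP => i; rewrite !mnmE; apply/eqP/negbNE.
by rewrite (bigD1 i) //= expr0n (negbTE mi) !mul0r.
Qed.

Lemma eval_x0_rees_kernel_linear (r : {mpoly K[n + s]}) :
  rees_map r = 0 -> linear_in_w r -> eval_x0 r = 0.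
Proof.
move=> r0 r1; rewrite /eval_x0 {1}(mpolyE r) raddf_sum big_seq big1 //= => m mr.
rewrite mmapZ -/(eval_x0 _) eval_x0X; case: eqP => [x0 | _]; last by rewrite mulr0.
have [k mk] := wdeg1P (eqP (allP r1 m mr)).
have -> : m = U_(rshift n k)%MM.
  by apply: mnm_split_eq => [|k']; rewrite ?xpart_U ?wpart_U.
by rewrite rees_kernel_linear_coeff // raddf0 mul0r.
Qed.

Lemma wdeg_wmon p : wdeg (wmon p) = (\sum_k p k)%N.
Proof. by rewrite wdegE; apply: eq_bigr => k _; rewrite wpart_wmon. Qed.

Lemma facet_mnm_inj : linear_type gs -> forall p q, facet_mnm p = facet_mnm q -> p =1 q.
Proof.
move=> hlin p q pq.
have wpq : wdeg (wmon p) = wdeg (wmon q).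
  by apply/eqP; rewrite !wdeg_wmon -(eqn_pmul2l (ltn0Sn d)) -!mdeg_facet_mnm pq.
pose P : {mpoly K[n + s]} := 'X_[wmon p] - 'X_[wmon q].
have P_rees0 : rees_map P = 0.
  rewrite rees_mapB !rees_mapX !xpart_wmon wpq.
  by rewrite !(eq_facet_mnm (wpart_wmon _)) pq subrr.
have [gs' [gs'_lin /in_idealP[cs P_comb]]] := hlin P P_rees0.
have : eval_x0 P = 0.
  rewrite P_comb /eval_x0 raddf_sum; apply: big1 => i _.
  change (eval_x0 (cs i * gs'`_i) = 0); rewrite eval_x0M.
  have [ri0 ri1] := gs'_lin _ (mem_nth 0 (ltn_ord i)).
  by rewrite (eval_x0_rees_kernel_linear ri0 ri1) mulr0.
rewrite /P /eval_x0 raddfB /= -!/(eval_x0 _) !eval_x0X !xpart_wmon eqxx.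
move=> /eqP; rewrite subr_eq0 => /eqP /(congr1 (mcoeff (wmon p))); rewrite !mcoeffX eqxx.
case: eqP => [pq_mon _ k | _ /eqP]; last by rewrite oner_eq0.
by rewrite -(wpart_wmon p k) -(wpart_wmon q k) pq_mon.
Qed.

End FacetRees.

Lemma rat_common_denom (I : finType) (v : I -> rat) :
  exists (e : rat) (z : I -> int), e != 0 /\ forall k, v k * e = (z k)%:~R.
Proof.
exists (\prod_k (denq (v k))%:~R), (fun k => numq (v k) * \prod_(l | l != k) denq (v l)).
split=> [|k]; first by apply/prodf_neq0 => k _; rewrite intr_eq0 denq_neq0.
by rewrite (bigD1 k) //= mulrA -numqE rmorphM rmorph_prod.
Qed.

Section FacetIncidence.
Variable K : fieldType.
Hypothesis charK0 : [pchar K] =i pred0.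
Variables (n : nat) (D : {set {set 'I_n}}) (d : nat).
Hypothesis hpure : pure_of_dim d D.
Hypothesis hlin : linear_type (facet_gens K D).
Local Notation s := (size (facet_gens K D)).

Definition facet_incidence_mx : 'M[rat]_(s, n) := \matrix_(k, i) (i \in facet_at D k)%:R.

Lemma facet_mnmE (p : 'I_s -> nat) i :
  facet_mnm p i = (\sum_(k < s) (i \in facet_at D k) * p k)%N.
Proof. by rewrite mnm_sumE; apply: eq_bigr => k _; rewrite mulmnE mnm_setE. Qed.

Lemma row_free_facet_incidence : row_free facet_incidence_mx.
Proof.
apply: inj_row_free => v vM0; apply/rowP => j; rewrite mxE.
have [e [z [e0 vz]]] := rat_common_denom (v 0).
pose p k := if z k is Posz m then m else 0%N.
pose q k := if z k is Negz m then m.+1 else 0%N.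
have zpq k : z k = (p k)%:R - (q k)%:R.
  by rewrite /p /q; case: (z k) => m; rewrite ?NegzE ?subr0 ?sub0r ?natz.
have pq : facet_mnm p = facet_mnm q.
  apply/mnmP => i; rewrite !facet_mnmE; apply/eqP.
  rewrite -(eqr_nat int) -subr_eq0 !natr_sum -sumrB -(intr_eq0 rat) rmorph_sum.
  move/rowP/(_ i): vM0; rewrite !mxE => /(congr1 ( *%R^~ e)).
  rewrite mul0r mulr_suml => vMe.
  rewrite -[X in _ == X]vMe; apply/eqP; apply: eq_bigr => k _.
  by rewrite !natrM -mulrBr -zpq rmorphM /= mxE mulrAC vz mulrC rmorph_nat.
have zj0 : z j = 0 by rewrite zpq (facet_mnm_inj hpure hlin pq) subrr.
by apply/eqP; rewrite -(mulIr_eq0 _ (mulIf e0)) vz zj0.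
Qed.

Lemma facet_sums_onto_of_linear_type : facet_sums_onto K D.
Proof.
pose M := map_mx (ratr_pchar0 charK0) facet_incidence_mx.
have /row_freeP[B MB] : row_free M by rewrite row_free_map row_free_facet_incidence.
move=> gam; pose bet := B *m \col_k gam (facet_at D k).
exists (fun i => bet i 0) => F FD; have [k <-] := facet_at_surj K FD.
have : (M *m bet) k 0 = gam (facet_at D k) by rewrite mulmxA MB mul1mx mxE.
rewrite mxE => <-; rewrite [LHS]big_mkcond; apply: eq_bigr => i _.
by rewrite !mxE rmorph_nat; case: (i \in _); rewrite ?mul1r ?mul0r.
Qed.

End FacetIncidence.

Theorem corollary4p2 (K : fieldType)
  (charK0 : [pchar K] =i pred0)
  (infK : forall s : seq K, exists x : K, x \notin s)
  (n : nat) (D : {set {set 'I_n}})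
  (hD : simplicial_complex D)
  (hpure : pure_of_dim 2 D)
  (hlin : linear_type (facet_gens K D)) :
  strong_lefschetz (AD_gens K D).
Proof.
(* Genericity is witnessed by the product of the variables: every [c] without
   zero coordinate works, which is why [infK] is not needed. *)
exists (\prod_(i < n) 'X_i); split.
  rewrite mprodXE; apply/eqP => /(congr1 (mcoeff (\sum_(i < n) U_(i))%MM)).
  by rewrite mcoeffX eqxx mcoeff0 => /eqP; rewrite oner_eq0.
move=> c Pc.
have c_neq0 i : c i != 0.
  by apply: contra Pc => /eqP ci; rewrite rmorph_prod (bigD1 i) //= mevalXU ci mul0r.
have honto := facet_sums_onto_of_linear_type charK0 hpure hlin.
exact: (AD_mult_full_rank charK0 hD hpure c_neq0 honto).
Qed.
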